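(* Let $\mathbb{F}$ be a field of characteristic $2$, $D$ an oriented diagram of a link $L$, $w_c\in\mathbb{F}$ weights for the components, and $(C(D),d=d_0+d_1)$ the deformed complex. Let $p$ and $q$ be marked points on $D$ lying on the same strand through crossing $i$, one on each side of that crossing (so that the arc of $D$ between them passes through crossing $i$ and no other crossing). Then $X_p$ and $X_q$ are chain homotopic endomorphisms of $(C(D),d)$.
   Context: For crossings $1,\dots,n$ and $I\in\{0,1\}^n$ let $I$ also denote the set of circles of the complete resolution (Khovanov $0$/$1$-smoothings). With $V=\mathbb{F}[x]/(x^2)$, $V(I)=\bigotimes_{\text{circles}}V$, identified with $\mathbb{F}[x_1,\dots,x_{p(I)}]/(x_j^2)$ with one variable per circle, and $C(D)=\bigoplus_IV(I)$. For an edge $(I,J)$ ($J$ from $I$ by changing digit $i$ from $0$ to $1$), $\mathcal{A}(I,J)$ is the saddle merge/split map ($m$, or $\Delta(1)=1\otimes x+x\otimes1$, $\Delta(x)=x\otimes x$) and $\mathcal{A}(J,I)$ is the map of the reversed saddle. $d_0=\sum_{(I,J)}\mathcal{A}(I,J)$ and $d_1=\sum_{(I,J)}s(i)(w^i_{\mathrm{over}}-w^i_{\mathrm{under}})\mathcal{A}(J,I)$ (signs irrelevant in characteristic 2), where $w^i_{\mathrm{over/under}}$ are the weights of the over/under strands at crossing $i$. For a marked point $p$ away from crossings, $X_p:C(D)\to C(D)$ multiplies $y\in V(I)$ by the variable of the circle of $I$ through $p$; it is a chain map for $d$. *)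

From HB Require Import structures.
From mathcomp Require Import all_boot all_order all_algebra.
Set Implicit Arguments. Unset Strict Implicit. Unset Printing Implicit Defensive.
Import GRing.Theory.
Local Open Scope ring_scope.

(* Link diagrams as planar diagram (PD) codes.                                 *)
(*  n crossings, m edge labels ('I_m).  pd k j is the edge at slot j of        *)
(*  crossing k; slots 0..3 are listed counterclockwise, slots 0 and 2 belong   *)
(*  to the under strand, slots 1 and 3 to the over strand (KnotTheory's        *)
(*  X[a,b,c,d] convention).  An edge label occurring in no slot is a            *)
(*  crossingless circle component of the diagram.                               *)

Section Diagram.
Variables (n m : nat) (pd : 'I_n -> 'I_4 -> 'I_m).

Definition slots_of (e : 'I_m) : {set 'I_n * 'I_4} :=
  [set s | pd s.1 s.2 == e].

Definition pd_wf : bool :=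
  [forall e, (#|slots_of e| == 0%N) || (#|slots_of e| == 2%N)].

Definition mate (s : 'I_n * 'I_4) : 'I_n * 'I_4 :=
  odflt s [pick t | (t != s) && (pd t.1 t.2 == pd s.1 s.2)].

(* face-tracing permutation of darts: rotation o edge involution *)
Definition face_step (s : 'I_n * 'I_4) : 'I_n * 'I_4 :=
  ((mate s).1, ordS (mate s).2).

Definition nfaces : nat := #|[set s | froot face_step s == s]|.

Definition cross_adj : rel 'I_n :=
  fun k k' => [exists j, exists j', pd k j == pd k' j'].

Definition ncross_comp : nat := #|[set k | fingraph.root cross_adj k == k]|.

(* Planarity (every connected component of the underlying 4-valent graph,
   with the rotation system given by the PD code, embeds in the sphere):
   Euler's formula V - E + F = 2 per component, with V = n, E = 2n. *)
Definition pd_planar : bool := nfaces == (n + 2 * ncross_comp)%N.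

Definition link_diagram : bool := pd_wf && pd_planar.

(* component weights, as functions on edges constant along each strand *)
Definition component_weight (F : Type) (wt : 'I_m -> F) : Prop :=
  forall k : 'I_n, wt (pd k (inord 0)) = wt (pd k (inord 2)) /\ wt (pd k (inord 1)) = wt (pd k (inord 3)).

(*  0-smoothing of X[a,b,c,d] joins (a,b),(c,d); 1-smoothing joins (b,c),(d,a). *)

Definition resolution := {ffun 'I_n -> bool}.

Definition smooth_joined (b : bool) (j j' : 'I_4) : bool :=
  if ~~ b then
    [|| [&& val j == 0%N & val j' == 1%N], [&& val j == 1%N & val j' == 0%N],
        [&& val j == 2%N & val j' == 3%N] | [&& val j == 3%N & val j' == 2%N]]
  else
    [|| [&& val j == 1%N & val j' == 2%N], [&& val j == 2%N & val j' == 1%N],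
        [&& val j == 3%N & val j' == 0%N] | [&& val j == 0%N & val j' == 3%N]].

Definition res_adj (I : resolution) : rel 'I_m :=
  fun e e' => [exists k, exists j, exists j',
    [&& smooth_joined (I k) j j', pd k j == e & pd k j' == e']].

(* the circle of I through edge e, represented by its canonical edge *)
Definition circ (I : resolution) (e : 'I_m) : 'I_m := fingraph.root (res_adj I) e.

Definition circles (I : resolution) : {set 'I_m} := [set e | circ I e == e].

(* The chain space C(D) = (+)_I V(I).  V(I) = F[x_c : c circle of I]/(x_c^2)  *)
(* has the monomial basis indexed by sets S of circles of I (monomial          *)
(* prod_{c in S} x_c).                                                         *)

Definition basis_ok (x : resolution * {set 'I_m}) : bool := x.2 \subset circles x.1.

Definition KhBasis := {x : resolution * {set 'I_m} | basis_ok x}.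

Variable F : fieldType.

Local Notation KhC := {ffun KhBasis -> F}.

Definition bv (I : resolution) (S : {set 'I_m}) : KhC :=
  [ffun b => ((val b == (I, S)) : bool)%:R].

Definition scv (a : F) (v : KhC) : KhC := [ffun b => a * v b].

Definition lin_ext (img : KhBasis -> KhC) (v : KhC) : KhC :=
  \sum_(b : KhBasis) scv (v b) (img b).

(* multiplication of the monomial S in V(J) by x_a *)
Definition mulx (J : resolution) (a : 'I_m) (S : {set 'I_m}) : KhC :=
  if a \in S then 0 else bv J (a |: S).

Definition flip (I : resolution) (k : 'I_n) : resolution :=
  [ffun j => if j == k then ~~ I j else I j].

(* saddle map A(I, flip I k) on the basis monomial S of V(I):
   merge m if the number of circles drops, split Delta otherwise,
   Delta(1) = 1 (x) x + x (x) 1, Delta(x) = x (x) x. *)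
Definition saddle (I : resolution) (k : 'I_n) (S : {set 'I_m}) : KhC :=
  let J := flip I k in
  let T := [set circ J c | c in S] in
  if #|T| != #|S| then 0 (* two factors x sent to the same circle: x^2 = 0 *)
  else if (#|circles J| < #|circles I|)%N then bv J T
  else mulx J (circ J (pd k (inord 0))) T + mulx J (circ J (pd k (inord 2))) T.

(* d0 : forward saddles;  d1 : reversed saddles weighted by w_over - w_under *)
Definition d0_img (wt : 'I_m -> F) (b : KhBasis) : KhC :=
  let I := (val b).1 in let S := (val b).2 in
  \sum_(k : 'I_n | ~~ I k) saddle I k S.

Definition d1_img (wt : 'I_m -> F) (b : KhBasis) : KhC :=
  let I := (val b).1 in let S := (val b).2 in
  \sum_(k : 'I_n | I k) scv (wt (pd k (inord 1)) - wt (pd k (inord 0))) (saddle I k S).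

Definition Kh_d (wt : 'I_m -> F) (v : KhC) : KhC :=
  lin_ext (fun b => d0_img wt b + d1_img wt b) v.

(* X_p for a marked point p on edge p *)
Definition Xmark (p : 'I_m) (v : KhC) : KhC :=
  lin_ext (fun b => mulx (val b).1 (circ (val b).1 p) (val b).2) v.

End Diagram.

Notation KhC pd F := {ffun KhBasis pd -> F}.

From HB Require Import structures.
From mathcomp Require Import all_boot all_order all_algebra zify.
Set Implicit Arguments. Unset Strict Implicit. Unset Printing Implicit Defensive.
Import GRing.Theory.

(* The homotopy is the reversed saddle at crossing [i], taken without weight.
   On a generator of [V(I)], each crossing [k <> i] contributes to [d h + h d]
   the two composites of the saddles at [i] and [k] around a square of the cube
   of resolutions, with the same coefficient; squares commute, so in
   characteristic 2 these contributions cancel.  Crossing [i] contributes a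
   saddle followed by its reverse, that is multiplication by [x_a + x_c], where
   [a] and [c] are the under-strand edges at [i].  Opposite edges at [i] lie on
   the circles of [a] and [c] in every resolution, so this is [X_p + X_q].

   The combinatorial input is the effect of changing the smoothing of one
   crossing [t] on the circles: if the edges [a] and [c] at [t] lie on different
   circles, these two circles merge and the others are unchanged; if they lie
   on the same circle, it splits.  This rests on the fact that a circle leaving
   [t] through one slot comes back to [t] through another one. *)

Definition slot0 : 'I_4 := @Ordinal 4 0 isT.
Definition slot1 : 'I_4 := @Ordinal 4 1 isT.
Definition slot2 : 'I_4 := @Ordinal 4 2 isT.
Definition slot3 : 'I_4 := @Ordinal 4 3 isT.

Lemma inord_slot0 : inord 0 = slot0. Proof. by apply/val_inj; rewrite /= inordK. Qed.
Lemma inord_slot2 : inord 2 = slot2. Proof. by apply/val_inj; rewrite /= inordK. Qed.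

Lemma slot_ind (P : 'I_4 -> Prop) :
  P slot0 -> P slot1 -> P slot2 -> P slot3 -> forall j, P j.
Proof.
move=> P0 P1 P2 P3 [[|[|[|[|k]]]] lt_j4] //.
- by rewrite (_ : Ordinal lt_j4 = slot0) //; apply/val_inj.
- by rewrite (_ : Ordinal lt_j4 = slot1) //; apply/val_inj.
- by rewrite (_ : Ordinal lt_j4 = slot2) //; apply/val_inj.
- by rewrite (_ : Ordinal lt_j4 = slot3) //; apply/val_inj.
Qed.

Lemma smooth_joined_sym b (j j' : 'I_4) : smooth_joined b j j' = smooth_joined b j' j.
Proof. by case: b; elim/slot_ind: j; elim/slot_ind: j'. Qed.

Definition smooth_partner (b : bool) (j : 'I_4) : 'I_4 :=
  if b then (match val j with 0 => slot3 | 1 => slot2 | 2 => slot1 | _ => slot0 end)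
  else (match val j with 0 => slot1 | 1 => slot0 | 2 => slot3 | _ => slot2 end).

Lemma smooth_joined_partner b j : smooth_joined b j (smooth_partner b j).
Proof. by case: b; elim/slot_ind: j. Qed.

Lemma smooth_partnerK b : involutive (smooth_partner b).
Proof. by case: b => j; elim/slot_ind: j. Qed.

Lemma smooth_partner_neq b j : smooth_partner b j != j.
Proof. by case: b; elim/slot_ind: j. Qed.

Lemma connect_sub_preorder (T : finType) (e E : rel T) :
  reflexive E -> transitive E -> subrel e E -> subrel (connect e) E.
Proof.
move=> reflE trE eE x _ /connectP[p ep ->]; elim: p x ep => //= y p IHp x /andP[exy /IHp].
exact: trE (eE _ _ exy).
Qed.

Definition same_circ n m (pd : 'I_n -> 'I_4 -> 'I_m) (I : resolution n) : rel 'I_m :=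
  connect (res_adj pd I).

Definition adj_off n m (pd : 'I_n -> 'I_4 -> 'I_m) (t : 'I_n) (I : resolution n) : rel 'I_m :=
  fun e e' => [exists k, exists j, exists j',
    [&& k != t, smooth_joined (I k) j j', pd k j == e & pd k j' == e']].

Section Circles.
Variables (n m : nat) (pd : 'I_n -> 'I_4 -> 'I_m).
Implicit Types (I : resolution n) (x y z : 'I_m).
Local Notation same_circ := (same_circ pd).
Local Notation adj_off := (adj_off pd).

Lemma res_adj_sym I : symmetric (res_adj pd I).
Proof.
move=> e e'; apply/existsP/existsP => -[k /existsP[j /existsP[j' /and3P[jj' ej ej']]]];
  by exists k; apply/existsP; exists j'; apply/existsP; exists j;
     rewrite smooth_joined_sym jj' ej ej'.
Qed.

Lemma same_circ_sym I : connect_sym (res_adj pd I).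
Proof. exact: sym_connect_sym (@res_adj_sym I). Qed.

Lemma same_circC I x y : same_circ I x y = same_circ I y x.
Proof. exact: same_circ_sym. Qed.

Lemma same_circ_trans I x y z : same_circ I x y -> same_circ I y z -> same_circ I x z.
Proof. exact: connect_trans. Qed.

Lemma same_circ_refl I x : same_circ I x x.
Proof. exact: connect0. Qed.

Lemma same_circP I x y : reflect (circ pd I x = circ pd I y) (same_circ I x y).
Proof. by rewrite /same_circ -(root_connect (@same_circ_sym I)); apply: eqP. Qed.

Lemma circ_idem I x : circ pd I (circ pd I x) = circ pd I x.
Proof. exact: (root_root (@same_circ_sym I)). Qed.

Lemma circ_in_circles I x : circ pd I x \in circles pd I.
Proof. by rewrite inE circ_idem. Qed.

Lemma same_circ_circ I x : same_circ I x (circ pd I x).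
Proof. exact: connect_root. Qed.

Lemma same_circ_join I t j j' :
  smooth_joined (I t) j j' -> same_circ I (pd t j) (pd t j').
Proof.
move=> jj'; apply: connect1; apply/existsP; exists t; apply/existsP; exists j.
by apply/existsP; exists j'; rewrite jj' !eqxx.
Qed.

Lemma flip_self I t : flip I t t = ~~ I t.
Proof. by rewrite /flip ffunE eqxx. Qed.

Lemma flip_other I t k : k != t -> flip I t k = I k.
Proof. by rewrite /flip ffunE => /negbTE ->. Qed.

Lemma flipK I t : flip (flip I t) t = I.
Proof. by apply/ffunP => k; rewrite /flip !ffunE; case: eqP => // ->; rewrite negbK. Qed.

Lemma flipC I t k : flip (flip I t) k = flip (flip I k) t.
Proof. by apply/ffunP => x; rewrite /flip !ffunE; case: eqP; case: eqP => // -> ->. Qed.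

Lemma adj_off_flip I t : adj_off t (flip I t) =2 adj_off t I.
Proof.
move=> e e'; apply/existsP/existsP => -[k /existsP[j /existsP[j' /and4P[kt jj' ej ej']]]];
  exists k; apply/existsP; exists j; apply/existsP; exists j'; rewrite kt ej ej' /= andbT.
  by rewrite flip_other in jj'.
by rewrite flip_other.
Qed.

Lemma adj_off_sub I t : subrel (adj_off t I) (res_adj pd I).
Proof.
move=> e e' /existsP[k /existsP[j /existsP[j' /and4P[_ jj' ej ej']]]].
by apply/existsP; exists k; apply/existsP; exists j; apply/existsP; exists j'; rewrite jj' ej ej'.
Qed.

Lemma connect_adj_off I t x y : connect (adj_off t I) x y -> same_circ I x y.
Proof. by apply: connect_sub => u v /adj_off_sub /connect1. Qed.

Lemma connect_adj_off_flip I t x y :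
  connect (adj_off t I) x y -> same_circ (flip I t) x y.
Proof. by move=> xy; apply: (@connect_adj_off _ t); rewrite (eq_connect (adj_off_flip I t)). Qed.

Lemma res_adj_split I t e e' : res_adj pd I e e' ->
  adj_off t I e e' \/
  exists j j', [/\ smooth_joined (I t) j j', pd t j = e & pd t j' = e'].
Proof.
move=> /existsP[k /existsP[j /existsP[j' /and3P[jj' /eqP ej /eqP ej']]]].
have [ekt | kt] := eqVneq k t; first by right; exists j, j'; rewrite -ekt.
by left; apply/existsP; exists k; apply/existsP; exists j; apply/existsP; exists j';
  rewrite kt jj' ej ej' !eqxx.
Qed.

End Circles.

(* Were the walk to come back to [d] through [mu], it would be a palindrome,
   forcing a fixed point of [sigma] or of [mu] at its midpoint. *)
Lemma involutive_walk_neq (T : eqType) (sigma mu : T -> T) :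
  involutive sigma -> involutive mu ->
  (forall x, sigma x != x) -> (forall x, mu x != x) ->
  forall d s, mu (iter s (sigma \o mu) d) != d.
Proof.
move=> sigmaK muK sigmaN muN d s; apply/eqP => back.
pose y u := iter u (sigma \o mu) d.
have yS u : y u.+1 = sigma (mu (y u)) by [].
have mirror u : u <= s -> mu (y (s - u)) = y u.
  elim: u => [|u IHu] lt_us; first by rewrite subn0.
  have e1 : y (s - u) = sigma (mu (y (s - u.+1))) by rewrite -yS subnSK.
  have e2 : y (s - u) = mu (y u) by rewrite -(IHu (ltnW lt_us)) muK.
  by rewrite yS -e2 e1 sigmaK.
have := odd_double_half s; rewrite -addnn; case: (odd s) => /= hs.
- have := @mirror s./2.+1 ltac:(lia); rewrite (_ : s - s./2.+1 = s./2); last by lia.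
  by rewrite yS => /eqP; rewrite eq_sym (negbTE (sigmaN _)).
- have := @mirror s./2 ltac:(lia); rewrite (_ : s - s./2 = s./2); last by lia.
  by move=> /eqP; rewrite (negbTE (muN _)).
Qed.

Section Topology.
Variables (n m : nat) (pd : 'I_n -> 'I_4 -> 'I_m).
Hypothesis wf : pd_wf pd.
Local Notation lab s := (pd s.1 s.2).

Lemma card_slots_lab s : #|slots_of pd (lab s)| = 2.
Proof.
apply/eqP; move/forallP: wf => /(_ (lab s)) /orP[/eqP/cards0_eq S0|//].
by have := in_set0 s; rewrite -S0 inE eqxx.
Qed.

Lemma mate_unique (s u : 'I_n * 'I_4) : u != s -> lab u = lab s -> mate pd s = u.
Proof.
move=> us lab_us; have /eqP/cards2P[x [y [xy Sxy]]] := card_slots_lab s.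
have sS : s \in slots_of pd (lab s) by rewrite inE.
have uS : u \in slots_of pd (lab s) by rewrite inE lab_us.
rewrite /mate; case: pickP => [v /andP[vs /eqP lab_vs]|/(_ u)]; last by rewrite us lab_us eqxx.
have vS : v \in slots_of pd (lab s) by rewrite inE lab_vs.
move: sS uS vS; rewrite Sxy !inE /=.
case/orP=> /eqP e1; case/orP=> /eqP e2; case/orP=> /eqP e3; subst;
  rewrite ?eqxx in us vs *; by [|rewrite (negbTE xy) in vs| rewrite eq_sym (negbTE xy) in vs].
Qed.

Lemma mate_neq_lab s : mate pd s != s /\ lab (mate pd s) = lab s.
Proof.
have /eqP/cards2P[x [y [xy Sxy]]] := card_slots_lab s.
have [u us uS] : exists2 u, u != s & u \in slots_of pd (lab s).
  have : s \in slots_of pd (lab s) by rewrite inE.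
  rewrite Sxy !inE => /orP[/eqP ->|/eqP ->]; first by exists y; rewrite 1?eq_sym // !inE eqxx orbT.
  by exists x; rewrite // !inE eqxx.
by move: uS; rewrite inE => /eqP lab_us; rewrite (mate_unique us lab_us).
Qed.

Lemma mate_neq s : mate pd s != s. Proof. by have [] := mate_neq_lab s. Qed.
Lemma lab_mate s : lab (mate pd s) = lab s. Proof. by have [] := mate_neq_lab s. Qed.

Lemma mateK : involutive (mate pd).
Proof. by move=> s; apply: mate_unique; rewrite ?lab_mate // eq_sym mate_neq. Qed.

Variable I : resolution n.

Definition smooth_dart (s : 'I_n * 'I_4) := (s.1, smooth_partner (I s.1) s.2).

Lemma smooth_dartK : involutive smooth_dart.
Proof. by case=> k j; rewrite /smooth_dart /= smooth_partnerK. Qed.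

Lemma smooth_dart_neq s : smooth_dart s != s.
Proof. by case: s => k j; rewrite /smooth_dart xpair_eqE eqxx smooth_partner_neq. Qed.

Definition circ_step s := smooth_dart (mate pd s).

Lemma circ_step_inj : injective circ_step.
Proof. by move=> x y /(congr1 smooth_dart); rewrite !smooth_dartK => /(can_inj mateK). Qed.

Lemma walk_returns (d : 'I_n * 'I_4) : exists s, (mate pd (iter s circ_step d)).1 == d.1.
Proof.
exists (order circ_step d).-1.
have := iter_order circ_step_inj d; rewrite -(prednK (order_gt0 circ_step d)) iterS.
by move/(congr1 smooth_dart); rewrite smooth_dartK => ->.
Qed.

Lemma walk_adj_off t d s :
  (forall u, u < s -> (mate pd (iter u circ_step d)).1 != t) ->
  connect (adj_off pd t I) (lab d) (lab (iter s circ_step d)).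
Proof.
elim: s => [//|s IHs] away; apply: connect_trans (IHs (fun u us => away u (ltnW us))) _.
apply: connect1; set x := mate pd (iter s circ_step d).
apply/existsP; exists x.1; apply/existsP; exists x.2; apply/existsP.
exists (smooth_partner (I x.1) x.2).
by rewrite away // smooth_joined_partner lab_mate !eqxx.
Qed.

Lemma arc_returns t j :
  exists2 l : 'I_4, l != j & connect (adj_off pd t I) (pd t j) (pd t l).
Proof.
have [s0 ret first] := ex_minnP (walk_returns (t, j)).
set x := mate pd (iter s0 circ_step (t, j)).
have x_t : x.1 = t by apply/eqP.
exists x.2.
  have := involutive_walk_neq smooth_dartK mateK smooth_dart_neq mate_neq (t, j) s0.
  by apply: contra => /eqP xj; apply/eqP; rewrite -/x [x]surjective_pairing x_t xj.
have -> : pd t x.2 = pd x.1 x.2 by rewrite x_t.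
rewrite /x lab_mate.
apply: (walk_adj_off (d := (t, j))) => u us; apply: contraTneq us => back.
by rewrite -leqNgt first // back.
Qed.

End Topology.

Section FlipCrossing.
Variables (n m : nat) (pd : 'I_n -> 'I_4 -> 'I_m).
Hypothesis wf : pd_wf pd.
Variable t : 'I_n.
Implicit Types (I K : resolution n) (x y : 'I_m).
Local Notation same_circ := (same_circ pd).
Local Notation circ := (circ pd).
Local Notation a := (pd t slot0).
Local Notation b := (pd t slot1).
Local Notation c := (pd t slot2).
Local Notation d := (pd t slot3).

Lemma same_circ_slots K : same_circ K a c -> forall j, same_circ K a (pd t j).
Proof.
move=> ac; elim/slot_ind; rewrite ?same_circ_refl //.
  case Kt: (K t); last by rewrite same_circC; apply: same_circ_join; rewrite Kt.
  by apply: same_circ_trans ac _; apply: same_circ_join; rewrite Kt.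
case Kt: (K t); first by rewrite same_circC; apply: same_circ_join; rewrite Kt.
by apply: same_circ_trans ac _; apply: same_circ_join; rewrite Kt.
Qed.

(* If [a] and [c] lie on one circle of [K'], the smoothing of [t] in [K] is
   irrelevant for [K']. *)
Lemma same_circ_sub_joined K K' : (forall k, k != t -> K' k = K k) ->
  same_circ K' a c -> subrel (same_circ K) (same_circ K').
Proof.
move=> KK' ac; apply: connect_sub => u v /(res_adj_split t) [uv|[j [j' [_ <- <-]]]].
  apply: connect1; move: uv => /existsP[k /existsP[j /existsP[j' /and4P[kt jj' ej ej']]]].
  by apply/existsP; exists k; apply/existsP; exists j; apply/existsP; exists j';
    rewrite KK' // jj' ej ej'.
by apply: same_circ_trans (same_circ_slots ac j'); rewrite same_circC same_circ_slots.
Qed.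

Lemma flip_same_circ_joined I : same_circ I a c -> same_circ (flip I t) a c ->
  same_circ (flip I t) =2 same_circ I.
Proof.
move=> acI acJ x y; apply/idP/idP; apply: same_circ_sub_joined => // k kt;
  by rewrite flip_other.
Qed.

Section Merge.
Variable I : resolution n.
Hypothesis ac : ~~ same_circ I a c.

Lemma arc_from_a : connect (adj_off pd t I) a (pd t (if I t then slot3 else slot1)).
Proof.
have [l l0 a_l] := arc_returns wf I t slot0; have aI := connect_adj_off a_l.
suff -> : (if I t then slot3 else slot1) = l by [].
case: (I t) (@same_circ_join _ _ pd I t) => join; move: l0 a_l aI;
  elim/slot_ind: l => // _ _ aI; case/negP: ac => //;
  by apply: same_circ_trans aI _; rewrite same_circC; apply: join.
Qed.

Lemma arc_from_c : connect (adj_off pd t I) c (pd t (if I t then slot1 else slot3)).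
Proof.
have [l l2 c_l] := arc_returns wf I t slot2; have cI := connect_adj_off c_l.
suff -> : (if I t then slot1 else slot3) = l by [].
case: (I t) (@same_circ_join _ _ pd I t) => join; move: l2 c_l cI;
  elim/slot_ind: l => // _ _ cI; case/negP: ac; rewrite same_circC //;
  by apply: same_circ_trans cI _; rewrite same_circC; apply: join.
Qed.

Lemma same_circ_flip_merge : subrel (same_circ I) (same_circ (flip I t)).
Proof.
apply: connect_sub => u v /(res_adj_split t) [uv|[j [j' [jj' <- <-]]]].
  by apply: connect1; apply: (@adj_off_sub _ _ _ _ t); rewrite adj_off_flip.
move: jj' arc_from_a arc_from_c; case: (I t);
  elim/slot_ind: j; elim/slot_ind: j' => //= _ arc1 arc2;
  by [ exact: connect_adj_off_flip arc1 | exact: connect_adj_off_flip arc2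
     | rewrite same_circ_sym; exact: connect_adj_off_flip arc1
     | rewrite same_circ_sym; exact: connect_adj_off_flip arc2 ].
Qed.

Lemma flip_merge_joins : same_circ (flip I t) a c.
Proof.
apply: same_circ_trans (connect_adj_off_flip arc_from_a) _.
case It: (I t); first by rewrite same_circC; apply: same_circ_join; rewrite flip_self It.
by apply: same_circ_join; rewrite flip_self It.
Qed.

(* The circles of [flip I t] are those of [I], with the circles of [a] and
   [c] identified; [merge_label] labels them accordingly. *)
Let merge_label x := if same_circ I x c then circ I a else circ I x.

Let merge_label_slot j : merge_label (pd t j) = circ I a.
Proof.
rewrite /merge_label; case: ifPn => // not_c; apply/esym/same_circP.
have join := @same_circ_join _ _ pd I t.
move: not_c; elim/slot_ind: j => not_c; first exact: same_circ_refl.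
- case It: (I t) in join; last by apply: join.
  by rewrite join in not_c.
- by rewrite same_circ_refl in not_c.
- case It: (I t) in join; first by apply: join.
  by rewrite same_circC join in not_c.
Qed.

Lemma flip_merge_same_circ x y : same_circ (flip I t) x y =
  [|| same_circ I x y, same_circ I x a && same_circ I y c
    | same_circ I x c && same_circ I y a].
Proof.
apply/idP/idP => [xy|].
  have : merge_label x == merge_label y.
    move: x y xy; apply: (connect_sub_preorder (E := fun x y => merge_label x == merge_label y)).
    - by move=> x.
    - by move=> y x z /eqP -> /eqP ->.
    move=> u v /(res_adj_split t) [uv|[j [j' [_ <- <-]]]]; last by rewrite !merge_label_slot.
    move: uv; rewrite adj_off_flip => /adj_off_sub/connect1 uv.
    rewrite /merge_label (_ : same_circ I u c = same_circ I v c); last first.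
      by apply/idP/idP; apply: same_circ_trans; rewrite // same_circC.
    by have /same_circP -> := uv.
  rewrite /merge_label; case: ifP => xc; case: ifP => yc /eqP.
  - by rewrite (same_circ_trans xc) // same_circC.
  - by move/esym/same_circP => ya; rewrite ya !orbT.
  - by move/same_circP => xa; rewrite xa orbT.
  - by move/same_circP ->.
have acJ := flip_merge_joins.
case/or3P => [/same_circ_flip_merge //|/andP[xa yc]|/andP[xc ya]].
  apply: same_circ_trans (same_circ_flip_merge xa) _; apply: same_circ_trans acJ _.
  by rewrite same_circC; apply: same_circ_flip_merge.
apply: same_circ_trans (same_circ_flip_merge xc) _; rewrite same_circC in acJ.
apply: same_circ_trans acJ _.
by rewrite same_circC; apply: same_circ_flip_merge.
Qed.

End Merge.

Lemma flip_split_same_circ I : same_circ I a c -> ~~ same_circ (flip I t) a c ->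
  forall x y, same_circ I x y = [|| same_circ (flip I t) x y,
    same_circ (flip I t) x a && same_circ (flip I t) y c
  | same_circ (flip I t) x c && same_circ (flip I t) y a].
Proof. by move=> _ acJ x y; rewrite -(flip_merge_same_circ acJ) flipK. Qed.

Lemma same_circ_flip_split I : same_circ I a c ->
  subrel (same_circ (flip I t)) (same_circ I).
Proof.
move=> acI x y; have [acJ|acJ] := boolP (same_circ (flip I t) a c).
  by rewrite flip_same_circ_joined.
by rewrite (flip_split_same_circ acI acJ) => ->.
Qed.

Lemma circles_imset I J : subrel (same_circ I) (same_circ J) ->
  circles pd J \subset circ J @: circles pd I.
Proof.
move=> IJ; apply/subsetP => e; rewrite inE => /eqP Je.
apply/imsetP; exists (circ I e); first exact: circ_in_circles.
by rewrite -{1}Je; apply/same_circP/IJ; apply: same_circ_circ.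
Qed.

Lemma flip_merges I :
  (#|circles pd (flip I t)| < #|circles pd I|) = ~~ same_circ I a c.
Proof.
have [acI|acI] := boolP (same_circ I a c).
  apply/negbTE; rewrite -leqNgt.
  apply: leq_trans (leq_imset_card (circ I) _) => /=.
  exact/subset_leq_card/circles_imset/same_circ_flip_split.
apply: leq_ltn_trans (subset_leq_card (circles_imset (same_circ_flip_merge acI))) _.
rewrite ltn_neqAle leq_imset_card andbT; apply: contra (acI) => /imset_injP inj.
have J_circ x : circ (flip I t) (circ I x) = circ (flip I t) x.
  by apply/same_circP/(same_circ_flip_merge acI); rewrite same_circC same_circ_circ.
apply/same_circP/inj; try exact: circ_in_circles.
rewrite !J_circ.
exact/same_circP/flip_merge_joins.
Qed.

End FlipCrossing.

Local Open Scope ring_scope.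

Section LinearExtension.
Variables (n m : nat) (pd : 'I_n -> 'I_4 -> 'I_m) (F : fieldType).
Local Notation KC := (KhC pd F).
Implicit Types (r : F) (u v : KC) (f g : KhBasis pd -> KC).

Lemma scvDr r u v : scv r (u + v) = scv r u + scv r v.
Proof. by apply/ffunP => x; rewrite !ffunE mulrDr. Qed.
Lemma scvr0 r : scv r (0 : KC) = 0.
Proof. by apply/ffunP => x; rewrite !ffunE mulr0. Qed.
Lemma scvDl r (r' : F) v : scv (r + r') v = scv r v + scv r' v.
Proof. by apply/ffunP => x; rewrite !ffunE mulrDl. Qed.
Lemma scv0 v : scv 0 v = 0.
Proof. by apply/ffunP => x; rewrite !ffunE mul0r. Qed.
Lemma scv1 v : scv 1 v = v.
Proof. by apply/ffunP => x; rewrite !ffunE mul1r. Qed.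
Lemma scvA r (r' : F) v : scv r (scv r' v) = scv (r * r') v.
Proof. by apply/ffunP => x; rewrite !ffunE mulrA. Qed.
Lemma scv_sumr r (I : Type) (rs : seq I) (P : pred I) (F_ : I -> KC) :
  scv r (\sum_(i <- rs | P i) F_ i) = \sum_(i <- rs | P i) scv r (F_ i).
Proof. exact: (big_morph (scv r) (scvDr r) (scvr0 r)). Qed.

Lemma lin_extD g u v : lin_ext g (u + v) = lin_ext g u + lin_ext g v.
Proof. by rewrite /lin_ext -big_split; apply: eq_bigr => b _; rewrite ffunE scvDl. Qed.
Lemma lin_ext0 g : lin_ext g 0 = 0.
Proof. by rewrite /lin_ext big1 // => b _; rewrite ffunE scv0. Qed.
Lemma lin_ext_sum g (I : Type) (r : seq I) (P : pred I) (F_ : I -> KC) :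
  lin_ext g (\sum_(i <- r | P i) F_ i) = \sum_(i <- r | P i) lin_ext g (F_ i).
Proof. exact: (big_morph (lin_ext g) (lin_extD g) (lin_ext0 g)). Qed.
Lemma lin_extZ g r v : lin_ext g (scv r v) = scv r (lin_ext g v).
Proof. by rewrite /lin_ext scv_sumr; apply: eq_bigr => b _; rewrite ffunE scvA. Qed.

Lemma lin_ext_comp f g v : lin_ext g (lin_ext f v) = lin_ext (fun b => lin_ext g (f b)) v.
Proof. by rewrite [lin_ext f v]/lin_ext lin_ext_sum; apply: eq_bigr => b _; rewrite lin_extZ. Qed.
Lemma lin_extDf f g v : lin_ext (fun b => f b + g b) v = lin_ext f v + lin_ext g v.
Proof. by rewrite /lin_ext -big_split; apply: eq_bigr => b _; rewrite scvDr. Qed.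
Lemma eq_lin_ext f g v : f =1 g -> lin_ext f v = lin_ext g v.
Proof. by move=> fg; apply: eq_bigr => b _; rewrite fg. Qed.

Lemma lin_ext_bv (G : resolution n -> {set 'I_m} -> KC) I S :
  basis_ok pd (I, S) -> lin_ext (fun b => G (val b).1 (val b).2) (bv pd F I S) = G I S.
Proof.
move=> IS; rewrite /lin_ext (bigD1 (exist _ (I, S) IS)) //= big1 ?addr0.
  by rewrite ffunE eqxx scv1.
move=> b /negbTE bIS; rewrite ffunE; case: eqP => [e|_]; last exact: scv0.
by rewrite (_ : b = exist _ (I, S) IS) ?eqxx // in bIS; apply/val_inj.
Qed.

Hypothesis hF : 2%N \in [pchar F].

Lemma addvv_pchar2 v : v + v = 0.
Proof. by apply/ffunP => b; rewrite !ffunE addrr_pchar2. Qed.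

Lemma subv_pchar2 u v : u - v = u + v.
Proof. by apply/ffunP => b; rewrite !ffunE (oppr_pchar2 hF). Qed.

End LinearExtension.

Section Monomials.
Variables (n m : nat) (pd : 'I_n -> 'I_4 -> 'I_m) (F : fieldType).
Local Notation KC := (KhC pd F).
Local Notation circ := (circ pd).
Implicit Types (I J : resolution n) (s : seq 'I_m).

(* The product of the variables of the circles through the edges of [s]
   (zero if two of these circles coincide). *)
Definition monom I s : KC :=
  if uniq (map (circ I) s) then bv pd F I [set x in map (circ I) s] else 0.

Lemma perm_monom I s s' :
  perm_eq (map (circ I) s) (map (circ I) s') -> monom I s = monom I s'.
Proof.
move=> ss'; rewrite /monom (perm_uniq ss'); congr (if _ then bv _ _ _ _ else _).
by apply/setP => x; rewrite !inE (perm_mem ss').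
Qed.

Lemma monom_perm I s s' : perm_eq s s' -> monom I s = monom I s'.
Proof. by move=> ss'; apply/perm_monom/perm_map. Qed.

Lemma eq_monom I s s' : map (circ I) s = map (circ I) s' -> monom I s = monom I s'.
Proof. by move=> ss'; apply: perm_monom; rewrite ss'. Qed.

Lemma monom_cons I x y s : circ I x = circ I y -> monom I (x :: s) = monom I (y :: s).
Proof. by move=> xy; apply: eq_monom; rewrite /= xy. Qed.

Lemma monom_nuniq I s : ~~ uniq (map (circ I) s) -> monom I s = 0.
Proof. by rewrite /monom => /negbTE ->. Qed.

Lemma monom_sqr I x y s : circ I x = circ I y -> monom I (x :: y :: s) = 0.
Proof. by move=> xy; rewrite monom_nuniq //= xy inE eqxx. Qed.

Lemma lin_ext_monom (G : resolution n -> {set 'I_m} -> KC) I s :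
  lin_ext (fun b => G (val b).1 (val b).2) (monom I s) =
  if uniq (map (circ I) s) then G I [set x in map (circ I) s] else 0.
Proof.
rewrite /monom; case: ifP => _; last exact: lin_ext0.
apply: lin_ext_bv; apply/subsetP => x; rewrite !inE => /mapP[y _ ->].
by rewrite /= circ_idem.
Qed.

Lemma mulx_monom J a s : uniq (map (circ J) s) ->
  mulx pd F J (circ J a) [set x in map (circ J) s] = monom J (a :: s).
Proof.
move=> us; rewrite /mulx /monom /= us andbT inE; case: ifP => // _.
by congr bv; apply/setP => x; rewrite !inE.
Qed.

Lemma uniq_map_coarse (f g : 'I_m -> 'I_m) s :
  (forall x y, g x = g y -> f x = f y) -> uniq (map f s) -> uniq (map g s).
Proof.
move=> gf; elim: s => //= x s IHs /andP[fx fs]; rewrite IHs // andbT.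
by apply: contra fx => /mapP[y ys /gf fxy]; apply/mapP; exists y.
Qed.

Lemma monom_swap I x y s : monom I (x :: y :: s) = monom I (y :: x :: s).
Proof. by apply: monom_perm; rewrite (perm_catCA [:: x] [:: y]). Qed.

(* The monomial of [s] times the sum of the variables of the circles of [x]
   and [y]. *)
Definition pair_sum I x y s : KC := monom I (x :: s) + monom I (y :: s).

Section SumOfTwo.
Variables (J : resolution n) (a c : 'I_m).

Definition merge_equiv y z := circ J y = circ J z \/
  (circ J y = circ J a /\ circ J z = circ J c) \/ (circ J y = circ J c /\ circ J z = circ J a).

(* [(x_a + x_c) x_a = x_a x_c = (x_a + x_c) x_c] *)
Lemma pair_sum_merge_equiv u y z s : merge_equiv y z ->
  pair_sum J a c (u ++ y :: s) = pair_sum J a c (u ++ z :: s).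
Proof.
have front (w v : 'I_m) : monom J (w :: u ++ v :: s) = monom J (v :: w :: u ++ s).
  by apply: monom_perm; rewrite (perm_catCA (w :: u) [:: v] s).
rewrite /pair_sum !front.
case=> [yz|[[ya zc]|[yc za]]]; first by rewrite !(monom_cons _ yz).
  by rewrite (monom_sqr _ ya) (monom_sqr _ zc) add0r addr0 (monom_cons _ ya) monom_swap (monom_cons _ zc).
by rewrite (monom_sqr _ yc) (monom_sqr _ za) add0r addr0 (monom_cons _ yc) monom_swap (monom_cons _ za).
Qed.

Lemma pair_sum_map (g : 'I_m -> 'I_m) s : (forall x, merge_equiv (g x) x) ->
  pair_sum J a c (map g s) = pair_sum J a c s.
Proof.
move=> gx; suff gen u : pair_sum J a c (u ++ map g s) = pair_sum J a c (u ++ s) by exact: (gen [::]).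
elim: s u => [|x s IHs] u //=.
by rewrite -cat_rcons IHs cat_rcons; apply: pair_sum_merge_equiv.
Qed.

End SumOfTwo.
End Monomials.

Lemma imset_set_seq (T : finType) (f : T -> T) (cs : seq T) :
  [set f y | y in [set x in cs]] = [set z in map f cs].
Proof.
apply/setP => z; rewrite inE; apply/imsetP/mapP => -[y ys ->]; exists y => //;
  by rewrite ?inE in ys *.
Qed.

Lemma card_set_map (T : finType) (f : T -> T) (cs : seq T) : uniq cs ->
  (#|[set z in map f cs]| == #|[set x in cs]|) = uniq (map f cs).
Proof.
by move=> ucs; rewrite !cardsE (card_uniqP ucs) -(size_map f); apply/eqP/card_uniqP.
Qed.

Section Saddle.
Variables (n m : nat) (pd : 'I_n -> 'I_4 -> 'I_m) (F : fieldType).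
Hypothesis wf : pd_wf pd.
Local Notation KC := (KhC pd F).
Local Notation same_circ := (same_circ pd).
Local Notation circ := (circ pd).
Local Notation monom := (monom pd F).
Local Notation a k := (pd k slot0).
Local Notation c k := (pd k slot2).
Implicit Types (I : resolution n) (k : 'I_n) (s : seq 'I_m).

(* [saddle] on the monomial of [s], as a sum of monomials: a split multiplies by
   [x_a + x_c], a merge only identifies the two circles. *)
Definition saddle_pre I k : seq (seq 'I_m) :=
  if same_circ I (a k) (c k) then [:: [:: a k]; [:: c k]] else [:: [::]].

Definition saddle_seq I k s : KC :=
  \sum_(u <- saddle_pre I k) monom (flip I k) (u ++ s).

Lemma saddle_seqE I k s : saddle_seq I k s =
  if same_circ I (a k) (c k) then pair_sum pd F (flip I k) (a k) (c k) s
  else monom (flip I k) s.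
Proof. by rewrite /saddle_seq /saddle_pre; case: ifP; rewrite !big_cons big_nil ?addr0. Qed.

Lemma split_merge_equiv I k x : same_circ I (a k) (c k) ->
  merge_equiv pd (flip I k) (a k) (c k) (circ I x) x.
Proof.
move=> acI; have [acJ|acJ] := boolP (same_circ (flip I k) (a k) (c k)).
  by left; apply/same_circP; rewrite flip_same_circ_joined // same_circC same_circ_circ.
have := same_circ_circ pd I x; rewrite same_circC (flip_split_same_circ wf acI acJ).
case/or3P => [/same_circP|/andP[/same_circP xa /same_circP xc]|/andP[/same_circP xc /same_circP xa]].
- by left.
- by right; left.
- by right; right.
Qed.

Lemma saddle_split I k s : same_circ I (a k) (c k) -> uniq (map (circ I) s) ->
  saddle pd F I k [set x in map (circ I) s] = saddle_seq I k s.
Proof.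
move=> acI us; set J := flip I k.
rewrite saddle_seqE acI /saddle inord_slot0 inord_slot2 -/J imset_set_seq (flip_merges wf).
rewrite acI /= card_set_map //; case: ifPn => [nuJ|/negPn uJ].
  rewrite -(pair_sum_map F _ (fun x => split_merge_equiv x acI)) /pair_sum.
  by rewrite !monom_nuniq ?addr0 //= (negbTE nuJ) andbF.
by rewrite !mulx_monom // -/(pair_sum _ _ _ _ _ _) pair_sum_map // => x; apply: split_merge_equiv.
Qed.

Lemma saddle_merge I k s : ~~ same_circ I (a k) (c k) -> uniq (map (circ I) s) ->
  saddle pd F I k [set x in map (circ I) s] = saddle_seq I k s.
Proof.
move=> acI us; set J := flip I k.
have circJ : map (circ J) (map (circ I) s) = map (circ J) s.
  rewrite -map_comp; apply: eq_map => x /=; apply/same_circP.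
  by rewrite same_circC; apply: (same_circ_flip_merge wf acI); rewrite same_circ_circ.
rewrite saddle_seqE (negbTE acI) /saddle inord_slot0 inord_slot2 -/J imset_set_seq.
by rewrite (flip_merges wf) acI /= card_set_map // circJ /monom; case: (uniq _).
Qed.

Lemma saddle_monom I k s :
  (if uniq (map (circ I) s) then saddle pd F I k [set x in map (circ I) s] else 0) =
  saddle_seq I k s.
Proof.
case: ifPn => us.
  by have [acI|acI] := boolP (same_circ I (a k) (c k));
    [apply: saddle_split | apply: saddle_merge].
rewrite saddle_seqE; case: ifP => acI.
  rewrite -(pair_sum_map F _ (fun x => split_merge_equiv x acI)) /pair_sum.
  by rewrite !monom_nuniq ?addr0 //; apply: contra us => /= /andP[_ /map_uniq].
suff nuJ : ~~ uniq (map (circ (flip I k)) s) by rewrite monom_nuniq.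
apply: contra us; apply: uniq_map_coarse => x y /same_circP xy; apply/same_circP.
exact: (same_circ_flip_merge wf (negbT acI)).
Qed.

End Saddle.

Section TwoSaddles.
Variables (n m : nat) (pd : 'I_n -> 'I_4 -> 'I_m) (F : fieldType).
Hypothesis wf : pd_wf pd.
Hypothesis hF : 2%N \in [pchar F].
Local Notation KC := (KhC pd F).
Local Notation same_circ := (same_circ pd).
Local Notation circ := (circ pd).
Local Notation monom := (monom pd F).
Local Notation saddle_pre := (saddle_pre pd).
Local Notation saddle_seq := (saddle_seq pd F).
Local Notation pair_sum := (pair_sum pd F).
Local Notation a k := (pd k slot0).
Local Notation c k := (pd k slot2).
Implicit Types (I Q : resolution n) (i k : 'I_n) (x y : 'I_m) (s : seq 'I_m).

Lemma pair_sum_joined Q x y s : same_circ Q x y -> pair_sum Q x y s = 0.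
Proof. by move/same_circP => xy; rewrite /pair_sum (monom_cons _ _ xy) addvv_pchar2. Qed.

Definition saddle_comp I i k s : KC :=
  \sum_(u <- saddle_pre I i) saddle_seq (flip I i) k (u ++ s).

Lemma saddle_compE I i k s : saddle_comp I i k s =
  if same_circ I (a i) (c i) then
    if same_circ (flip I i) (a k) (c k) then
      pair_sum (flip (flip I i) k) (a k) (c k) (a i :: s) +
      pair_sum (flip (flip I i) k) (a k) (c k) (c i :: s)
    else pair_sum (flip (flip I i) k) (a i) (c i) s
  else if same_circ (flip I i) (a k) (c k) then pair_sum (flip (flip I i) k) (a k) (c k) s
  else monom (flip (flip I i) k) s.
Proof.
rewrite /saddle_comp /saddle_pre; case: ifP => _;
  by rewrite !big_cons big_nil ?addr0 !saddle_seqE /pair_sum; case: ifP.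
Qed.

Lemma saddle_comp_self I i s : saddle_comp I i i s = pair_sum I (a i) (c i) s.
Proof.
rewrite saddle_compE flipK; case: ifPn => [Ii|Ii]; last by rewrite flip_merge_joins.
by case: ifP => // _; rewrite !pair_sum_joined ?addr0.
Qed.

Lemma split_unjoined_joins I i k : same_circ I (a i) (c i) ->
  ~~ same_circ (flip I k) (a i) (c i) -> same_circ (flip (flip I k) i) (a k) (c k).
Proof.
move=> Ii Ji; set K := flip I k in Ji *.
have /same_circP Qi := flip_merge_joins wf Ji.
have KQ x y : same_circ K x y -> circ (flip K i) x = circ (flip K i) y.
  by move=> xy; apply/same_circP/(same_circ_flip_merge wf Ji).
have [Kk|Kk] := boolP (same_circ K (a k) (c k)); first exact/same_circP/KQ.
move: Ii; rewrite -[I](flipK I k) -/K (flip_merge_same_circ wf Kk) (negbTE Ji) /=.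
by case/orP=> /andP[/KQ e1 /KQ e2]; apply/same_circP; congruence.
Qed.

Lemma merge_merge_joined I i k :
  ~~ same_circ I (a i) (c i) -> ~~ same_circ I (a k) (c k) ->
  same_circ (flip I i) (a k) (c k) -> same_circ (flip I k) (a i) (c i).
Proof.
move=> Ii Ik; rewrite (flip_merge_same_circ wf Ii) (negbTE Ik) /=.
have IK x y : same_circ I x y -> circ (flip I k) x = circ (flip I k) y.
  by move=> xy; apply/same_circP/(same_circ_flip_merge wf Ik).
have /same_circP Kk := flip_merge_joins wf Ik.
by case/orP=> /andP[/IK e1 /IK e2]; apply/same_circP; congruence.
Qed.

Lemma merge_merge_pair_sum I i k s :
  ~~ same_circ I (a i) (c i) -> ~~ same_circ I (a k) (c k) ->
  same_circ (flip I i) (a k) (c k) -> same_circ (flip I k) (a i) (c i) ->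
  pair_sum (flip (flip I i) k) (a k) (c k) s = pair_sum (flip (flip I i) k) (a i) (c i) s.
Proof.
move=> Ii Ik Jk Ji; set Q := flip (flip I i) k.
have QK : Q = flip (flip I k) i by rewrite flipC.
have [Qi|Qi] := boolP (same_circ Q (a i) (c i)).
  have Qi' : same_circ (flip (flip I k) i) (a i) (c i) by rewrite -QK.
  have Qk : same_circ Q (a k) (c k).
    by rewrite QK (flip_same_circ_joined Ji Qi') (flip_merge_joins wf Ik).
  by rewrite !pair_sum_joined.
have [Qk|Qk] := boolP (same_circ Q (a k) (c k)).
  by move: Qi; rewrite (flip_same_circ_joined Jk Qk) (flip_merge_joins wf Ii).
have := flip_merge_joins wf Ii; rewrite (flip_split_same_circ wf Jk Qk) (negbTE Qi) /=.
rewrite /pair_sum; case/orP=> /andP[/same_circP e1 /same_circP e2].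
  by rewrite (monom_cons _ _ e1) (monom_cons _ _ e2).
by rewrite (monom_cons _ _ e1) (monom_cons _ _ e2) addrC.
Qed.

Lemma saddle_compC I i k s : k != i -> saddle_comp I i k s = saddle_comp I k i s.
Proof.
move=> ki; rewrite !saddle_compE [flip (flip I k) i]flipC.
set Q := flip (flip I i) k; have QK : flip (flip I k) i = Q by rewrite flipC.
have [Ii|Ii] := boolP (same_circ I (a i) (c i));
  have [Ik|Ik] := boolP (same_circ I (a k) (c k)).
- have [Jk|Jk] := boolP (same_circ (flip I i) (a k) (c k));
    have [Ji|Ji] := boolP (same_circ (flip I k) (a i) (c i)).
  + by rewrite /pair_sum !(monom_swap _ _ Q (a k)) !(monom_swap _ _ Q (c k)) addrACA.
  + have Qk : same_circ Q (a k) (c k) by rewrite -QK split_unjoined_joins.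
    by rewrite !pair_sum_joined ?addr0.
  + have Qi : same_circ Q (a i) (c i) by rewrite split_unjoined_joins.
    by rewrite !pair_sum_joined ?addr0.
  + have Qi : same_circ Q (a i) (c i) by rewrite -QK; apply: flip_merge_joins.
    have Qk : same_circ Q (a k) (c k) by apply: flip_merge_joins.
    by rewrite !pair_sum_joined.
- have -> : same_circ (flip I i) (a k) (c k) = false.
    by apply: contraNF Ik; apply: same_circ_flip_split.
  by rewrite (same_circ_flip_merge wf Ik Ii).
- have -> : same_circ (flip I k) (a i) (c i) = false.
    by apply: contraNF Ii; apply: same_circ_flip_split.
  by rewrite (same_circ_flip_merge wf Ii Ik).
- have [Jk|Jk] := boolP (same_circ (flip I i) (a k) (c k));
    have [Ji|Ji] := boolP (same_circ (flip I k) (a i) (c i)) => //.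
  + exact: merge_merge_pair_sum.
  + by case/negP: Ji; apply: merge_merge_joined.
  + by case/negP: Jk; apply: merge_merge_joined.
Qed.

End TwoSaddles.

Section Homotopy.
Variables (n m : nat) (pd : 'I_n -> 'I_4 -> 'I_m) (F : fieldType).
Hypothesis wf : pd_wf pd.
Hypothesis hF : 2%N \in [pchar F].
Variables (wt : 'I_m -> F) (i : 'I_n).
Local Notation KC := (KhC pd F).
Local Notation circ := (circ pd).
Local Notation monom := (monom pd F).
Local Notation saddle_pre := (saddle_pre pd).
Local Notation saddle_seq := (saddle_seq pd F).
Local Notation saddle_comp := (saddle_comp pd F).
Local Notation pair_sum := (pair_sum pd F).
Local Notation a k := (pd k slot0).
Local Notation c k := (pd k slot2).
Implicit Types (I J : resolution n) (k : 'I_n) (s : seq 'I_m).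

Definition edge_coef J k : F :=
  if J k then wt (pd k (inord 1)) - wt (pd k (inord 0)) else 1.

Definition d_img (b : KhBasis pd) : KC := d0_img wt b + d1_img wt b.

Definition homotopy_img (b : KhBasis pd) : KC :=
  if (val b).1 i then saddle pd F (val b).1 i (val b).2 else 0.

Definition d_seq J s : KC := \sum_k scv (edge_coef J k) (saddle_seq J k s).
Definition homotopy_seq J s : KC := if J i then saddle_seq J i s else 0.

Lemma d_imgE b : d_img b = \sum_k scv (edge_coef (val b).1 k) (saddle pd F (val b).1 k (val b).2).
Proof.
rewrite /d_img /d0_img /d1_img [RHS](bigID (fun k => (val b).1 k)) /= addrC.
by congr (_ + _); apply: eq_bigr => k bk; rewrite /edge_coef ?(negbTE bk) ?scv1 ?bk.
Qed.

Lemma lin_ext_d_monom J s : lin_ext d_img (monom J s) = d_seq J s.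
Proof.
rewrite (eq_lin_ext _ d_imgE).
rewrite (lin_ext_monom (fun J S => \sum_k scv (edge_coef J k) (saddle pd F J k S))) /d_seq.
case us: (uniq _).
  by apply: eq_bigr => k _; rewrite -(saddle_monom F wf) us.
by rewrite big1 // => k _; rewrite -(saddle_monom F wf) us scvr0.
Qed.

Lemma lin_ext_homotopy_monom J s : lin_ext homotopy_img (monom J s) = homotopy_seq J s.
Proof.
rewrite (lin_ext_monom (fun J S => if J i then saddle pd F J i S else 0)) /homotopy_seq.
by case us: (uniq _); case: (J i) => //; rewrite -(saddle_monom F wf) us.
Qed.

Lemma lin_ext_homotopy_d J s : lin_ext homotopy_img (d_seq J s) =
  \sum_k scv (edge_coef J k) (\sum_(u <- saddle_pre J k) homotopy_seq (flip J k) (u ++ s)).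
Proof.
rewrite /d_seq lin_ext_sum; apply: eq_bigr => k _; rewrite lin_extZ lin_ext_sum.
by congr scv; apply: eq_bigr => u _; rewrite lin_ext_homotopy_monom.
Qed.

Lemma lin_ext_d_homotopy J s : lin_ext d_img (homotopy_seq J s) =
  if J i then \sum_k scv (edge_coef (flip J i) k) (saddle_comp J i k s) else 0.
Proof.
rewrite /homotopy_seq; case: (J i); last exact: lin_ext0.
rewrite /saddle_seq lin_ext_sum (eq_bigr _ (fun u _ => lin_ext_d_monom _ _)).
by rewrite /d_seq exchange_big; apply: eq_bigr => k _; rewrite scv_sumr.
Qed.

(* The part of [d h + h d] coming from crossing [k]. *)
Definition homotopy_term J s k : KC :=
  (if J i then scv (edge_coef (flip J i) k) (saddle_comp J i k s) else 0) +
  scv (edge_coef J k) (\sum_(u <- saddle_pre J k) homotopy_seq (flip J k) (u ++ s)).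

Lemma homotopy_term_other J s k : k != i -> homotopy_term J s k = 0.
Proof.
move=> ki; rewrite /homotopy_term /edge_coef flip_other //.
under eq_bigr => u _ do rewrite /homotopy_seq flip_other 1?eq_sym //.
case: (J i); last by rewrite big1 ?scvr0 ?addr0.
by rewrite (saddle_compC wf hF) // addvv_pchar2.
Qed.

Lemma homotopy_term_self J s : homotopy_term J s i = pair_sum J (a i) (c i) s.
Proof.
rewrite /homotopy_term /edge_coef flip_self.
under eq_bigr => u _ do rewrite /homotopy_seq flip_self.
case: (J i) => /=; last by rewrite add0r scv1 -(saddle_comp_self wf hF).
by rewrite scv1 big1 ?scvr0 ?addr0 ?(saddle_comp_self wf hF).
Qed.

Lemma homotopy_seq_basis J s :
  pair_sum J (a i) (c i) s = lin_ext d_img (homotopy_seq J s) + lin_ext homotopy_img (d_seq J s).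
Proof.
rewrite lin_ext_d_homotopy lin_ext_homotopy_d.
rewrite (_ : (if J i then _ else 0) = \sum_k if J i then
  scv (edge_coef (flip J i) k) (saddle_comp J i k s) else 0); last first.
  by case: (J i) => //; rewrite big1.
rewrite -big_split (bigD1 i) //= [X in _ + X]big1 ?addr0; last exact: homotopy_term_other.
exact: (esym (homotopy_term_self J s)).
Qed.

(* Opposite edges at [i] lie on the circles of [a i] and [c i], in some order. *)
Lemma pair_sum_opposite I j s :
  pair_sum I (pd i j) (pd i (ordS (ordS j))) s = pair_sum I (a i) (c i) s.
Proof.
have join j1 j2 : smooth_joined (I i) j1 j2 -> circ I (pd i j1) = circ I (pd i j2).
  by move=> j12; apply/same_circP/same_circ_join.
have bd : pair_sum I (pd i slot1) (pd i slot3) s = pair_sum I (a i) (c i) s.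
  rewrite /pair_sum; case It: (I i) join => join.
    by rewrite (monom_cons _ _ (join slot1 slot2 isT)) (monom_cons _ _ (join slot3 slot0 isT)) addrC.
  by rewrite (monom_cons _ _ (join slot1 slot0 isT)) (monom_cons _ _ (join slot3 slot2 isT)).
elim/slot_ind: j.
- by rewrite (_ : ordS (ordS slot0) = slot2) //; apply: val_inj.
- by rewrite (_ : ordS (ordS slot1) = slot3) //; apply: val_inj.
- rewrite (_ : ordS (ordS slot2) = slot0); last exact: val_inj.
  by rewrite /pair_sum addrC.
- rewrite (_ : ordS (ordS slot3) = slot1); last exact: val_inj.
  by rewrite -bd /pair_sum addrC.
Qed.

Lemma homotopy_basis j (b : KhBasis pd) :
  mulx pd F (val b).1 (circ (val b).1 (pd i j)) (val b).2 +
  mulx pd F (val b).1 (circ (val b).1 (pd i (ordS (ordS j)))) (val b).2 =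
  lin_ext d_img (homotopy_img b) + lin_ext homotopy_img (d_img b).
Proof.
case: b => [[I S] IS] /=; set s := enum S.
have circ_s : map (circ I) s = s.
  apply: map_id_in => x; rewrite mem_enum => xS.
  by move/subsetP: IS => /(_ x xS); rewrite inE => /eqP.
have us : uniq (map (circ I) s) by rewrite circ_s enum_uniq.
have S_s : S = [set x in map (circ I) s] by rewrite circ_s; apply/setP => x; rewrite inE mem_enum.
have -> : homotopy_img (exist _ (I, S) IS) = homotopy_seq I s.
  by rewrite /homotopy_img /homotopy_seq /= S_s -(saddle_monom F wf) us.
have -> : d_img (exist _ (I, S) IS) = d_seq I s.
  by rewrite d_imgE /d_seq; apply: eq_bigr => k _ /=; rewrite S_s -(saddle_monom F wf) us.
rewrite S_s !mulx_monom // -/(pair_sum I _ _ s) pair_sum_opposite.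
exact: homotopy_seq_basis.
Qed.

End Homotopy.

Theorem proposition6p4 (F : fieldType) (hF : 2%N \in [pchar F])
  (n m : nat) (pd : 'I_n -> 'I_4 -> 'I_m) (hD : link_diagram pd)
  (wt : 'I_m -> F) (hwt : component_weight pd wt)
  (i : 'I_n) (j : 'I_4) (p q : 'I_m)
  (hp : p = pd i j) (hq : q = pd i (ordS (ordS j))) :
  exists h : KhBasis pd -> KhC pd F,
    forall v : KhC pd F,
      Xmark p v - Xmark q v = Kh_d wt (lin_ext h v) + lin_ext h (Kh_d wt v).
Proof.
have wf : pd_wf pd by case/andP: hD.
exists (homotopy_img F i) => v.
rewrite (subv_pchar2 hF) /Xmark -lin_extDf /Kh_d -/(d_img wt) !lin_ext_comp -lin_extDf.
by apply: eq_lin_ext => b; rewrite hp hq; apply: homotopy_basis.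
Qed.
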